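(* The loss of information about the receiver's initial position due to the nuisance parameters is $\mathbf G(\mathbf p_{U,0},\mathbf p_{U,0})=\sum_b\frac{\mathbf a_b\mathbf a_b^T}{\sum_{u,k}\mathrm{SNR}_{bu,k}\omega_{bU,k}}+\frac{\mathbf a_Q\mathbf a_Q^T}{\sum_{q,u,k}\mathrm{SNR}_{qu,k}\omega_{qU,k}}+\sum_b\frac{\mathbf d_b\mathbf d_b^T}{\sum_{u,k}\tfrac12\mathrm{SNR}_{bu,k}\alpha_{obu,k}^2}+\frac{\mathbf d_Q\mathbf d_Q^T}{\sum_{q,u,k}\tfrac12\mathrm{SNR}_{qu,k}\alpha_{oqu,k}^2}$, where $\mathbf a_b=\sum_{k,u}\mathrm{SNR}_{bu,k}\frac{\omega_{bU,k}}{c}\boldsymbol\Delta_{bu,k}$, $\mathbf a_Q=\sum_{q,u,k}\mathrm{SNR}_{qu,k}\frac{\omega_{qU,k}}{c}\boldsymbol\Delta_{qu,k}$, $\mathbf d_b=\sum_{u,k}\mathrm{SNR}_{bu,k}\frac{f_c\alpha_{obu,k}^2}{2}\nabla_{\mathbf p_{U,0}}\nu_{bU,k}$, $\mathbf d_Q=\sum_{q,u,k}\mathrm{SNR}_{qu,k}\frac{f_c\alpha_{oqu,k}^2}{2}\nabla_{\mathbf p_{U,0}}\nu_{qU,k}$.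
   Context: System: $N_B$ single-antenna LEO satellites indexed by $b$, $N_Q$ mutually synchronized single-antenna base stations (BSs) indexed by $q$, and a receiver with $N_U$ antennas indexed by $u$; transmissions occur in $N_K$ slots indexed by $k$, spaced $\Delta_t$ apart; $c$ is the speed of light, $f_c$ the carrier frequency. Receiver antenna $u$ is at $\mathbf p_{u,k}=\mathbf p_{U,0}+k\Delta_t\mathbf v_{U,0}+\mathbf Q(\boldsymbol\Phi_U)\tilde{\mathbf s}_u$, with $\mathbf Q(\boldsymbol\Phi_U)$ the 3D rotation matrix for orientation angles $\boldsymbol\Phi_U=[\alpha_U,\psi_U,\varphi_U]^T$ and $\tilde{\mathbf s}_u$ a known offset. LEO $b$ has known nominal position/velocity $\mathbf p_{b,k},\mathbf v_{b,k}$ and unknown constant position offset $\check{\mathbf p}_{b,0}$ and velocity offset $\check{\mathbf v}_{b,0}$; BSs are static and known. $\boldsymbol\Delta_{xy,k}$ is the unit vector from entity $x$ to entity $y$ at slot $k$ ($U$: receiver centroid, $u$: antenna $u$). Channel parameters: LEO–receiver link: delays $\tau_{bu,k}$, Dopplers $\nu_{bU,k}=\boldsymbol\Delta_{bU,k}^T(\mathbf v_{b,k}+\check{\mathbf v}_{b,0}-\mathbf v_{U,0})/c$, gains, time offset $\delta_{bU}$, frequency offset $\epsilon_{bU}$; BS–receiver link: delays $\tau_{qu,k}$, Dopplers $\nu_{qU,k}=-\boldsymbol\Delta_{qU,k}^T\mathbf v_{U,0}/c$, gains, common offsets $\delta_{QU},\epsilon_{QU}$; LEO–BS link: delays $\tau_{bq,k}$,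 Dopplers $\nu_{bq,k}=\boldsymbol\Delta_{bq,k}^T(\mathbf v_{b,k}+\check{\mathbf v}_{b,0})/c$, gains, offsets $\delta_{bQ},\epsilon_{bQ}$. $\mathrm{SNR}_{bu,k},\mathrm{SNR}_{qu,k},\mathrm{SNR}_{bq,k}$ are the received SNRs; $\alpha_{obu,k},\alpha_{oqu,k},\alpha_{obq,k}$ the RMS time durations; $\alpha_{1x,k},\alpha_{2x,k}$ the effective baseband bandwidth and baseband–carrier correlation of transmitter $x$; $f_{obU,k}=f_c(1-\nu_{bU,k})+\epsilon_{bU}$, $f_{oqU,k}=f_c(1-\nu_{qU,k})+\epsilon_{QU}$, $f_{obq,k}=f_c(1-\nu_{bq,k})+\epsilon_{bQ}$, and $\omega_{bU,k}=\alpha_{1b,k}^2+2f_{obU,k}\alpha_{1b,k}\alpha_{2b,k}+f_{obU,k}^2$, $\omega_{qU,k}=\alpha_{1q,k}^2+2f_{oqU,k}\alpha_{1q,k}\alpha_{2q,k}+f_{oqU,k}^2$, $\omega_{bq,k}=\alpha_{1q,k}^2+2f_{obq,k}\alpha_{1q,k}\alpha_{2q,k}+f_{obq,k}^2$. Channel-parameter FIM (links mutually independent, contributions additive): each observation (antenna $u$, slot $k$, LEO $b$) contributes $F(\tau_{bu,k},\tau_{bu,k})=F(\delta_{bU},\delta_{bU})=-F(\tau_{bu,k},\delta_{bU})=\mathrm{SNR}_{bu,k}\omega_{bU,k}$, $F(\nu_{bU,k},\nu_{bU,k})=\tfrac12\mathrm{SNR}_{bu,k}f_c^2\alpha_{obu,k}^2$,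 $F(\nu_{bU,k},\epsilon_{bU})=-\tfrac12\mathrm{SNR}_{bu,k}f_c\alpha_{obu,k}^2$, $F(\epsilon_{bU},\epsilon_{bU})=\tfrac12\mathrm{SNR}_{bu,k}\alpha_{obu,k}^2$, a gain-only diagonal term, and all other entries zero; the BS–receiver (indices $qu,k$, offsets $\delta_{QU},\epsilon_{QU}$, $\omega_{qU,k},\alpha_{oqu,k}$) and LEO–BS (indices $bq,k$, offsets $\delta_{bQ},\epsilon_{bQ}$, $\omega_{bq,k},\alpha_{obq,k}$) links are analogous. Location FIM: $\mathbf J_{\boldsymbol\kappa}=\boldsymbol\Upsilon\mathbf J_{\boldsymbol\eta}\boldsymbol\Upsilon^T$ where $\boldsymbol\Upsilon$ is the Jacobian with nonzero derivatives $\nabla_{\mathbf p_{U,0}}\tau_{bu,k}=\boldsymbol\Delta_{bu,k}/c$, $\nabla_{\mathbf p_{U,0}}\tau_{qu,k}=\boldsymbol\Delta_{qu,k}/c$, $\nabla_{\check{\mathbf p}_{b,0}}\tau_{bu,k}=-\boldsymbol\Delta_{bu,k}/c$, $\nabla_{\check{\mathbf p}_{b,0}}\tau_{bq,k}=-\boldsymbol\Delta_{bq,k}/c$, $\nabla_{\mathbf v_{U,0}}\tau_{bu,k}=k\Delta_t\boldsymbol\Delta_{bu,k}/c$, $\nabla_{\mathbf v_{U,0}}\tau_{qu,k}=k\Delta_t\boldsymbol\Delta_{qu,k}/c$, $\nabla_{\check{\mathbf v}_{b,0}}\tau_{bu,k}=-k\Delta_t\boldsymbol\Delta_{bu,k}/c$,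 $\nabla_{\check{\mathbf v}_{b,0}}\tau_{bq,k}=-k\Delta_t\boldsymbol\Delta_{bq,k}/c$, $\nabla_{\mathbf v_{U,0}}\nu_{bU,k}=-\boldsymbol\Delta_{bU,k}/c$, $\nabla_{\mathbf v_{U,0}}\nu_{qU,k}=-\boldsymbol\Delta_{qU,k}/c$, $\nabla_{\check{\mathbf v}_{b,0}}\nu_{bU,k}=\boldsymbol\Delta_{bU,k}/c$, $\nabla_{\check{\mathbf v}_{b,0}}\nu_{bq,k}=\boldsymbol\Delta_{bq,k}/c$, $\nabla_{\boldsymbol\Phi_U}\tau_{xu,k}=\frac1c[\boldsymbol\Delta_{xu,k}^T\partial_{\alpha_U}\mathbf Q\tilde{\mathbf s}_u,\boldsymbol\Delta_{xu,k}^T\partial_{\psi_U}\mathbf Q\tilde{\mathbf s}_u,\boldsymbol\Delta_{xu,k}^T\partial_{\varphi_U}\mathbf Q\tilde{\mathbf s}_u]^T$ ($x\in\{b,q\}$), the Doppler position-gradients $\nabla_{\mathbf p_{U,0}}\nu_{bU,k},\nabla_{\mathbf p_{U,0}}\nu_{qU,k},\nabla_{\check{\mathbf p}_{b,0}}\nu_{bU,k},\nabla_{\check{\mathbf p}_{b,0}}\nu_{bq,k}$, and identity on gains and offsets. $\mathbf F(\mathbf x,\mathbf y)$ denotes the block of $\mathbf J_{\boldsymbol\kappa}$ for sub-vectors $\mathbf x,\mathbf y$. Information loss: split $\boldsymbol\kappa=(\boldsymbol\kappa_1,\boldsymbol\kappa_2)$ with $\boldsymbol\kappa_1=(\mathbf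 p_{U,0},\mathbf v_{U,0},\boldsymbol\Phi_U,\{\check{\mathbf p}_{b,0}\},\{\check{\mathbf v}_{b,0}\})$ and nuisance $\boldsymbol\kappa_2$ = all channel gains and all time/frequency offsets $\delta_{bU},\epsilon_{bU},\delta_{QU},\epsilon_{QU},\delta_{bQ},\epsilon_{bQ}$. The loss matrix is $\mathbf J^{nu}=\mathbf J_{\boldsymbol\kappa_1,\boldsymbol\kappa_2}\mathbf J_{\boldsymbol\kappa_2}^{-1}\mathbf J_{\boldsymbol\kappa_1,\boldsymbol\kappa_2}^T$ (so the equivalent FIM is $\mathbf J_{\boldsymbol\kappa_1}-\mathbf J^{nu}$), and $\mathbf G(\mathbf x,\mathbf y)$ denotes its block for sub-vectors $\mathbf x,\mathbf y$. *)

From HB Require Import structures.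
From mathcomp Require Import all_boot all_order all_algebra.
Set Implicit Arguments. Unset Strict Implicit. Unset Printing Implicit Defensive.
Import Order.TTheory GRing.Theory Num.Theory.
Local Open Scope ring_scope.

(* Index types.  b : 'I_NB (LEOs), q : 'I_NQ (BSs), u : 'I_NU (antennas),    *)
(* k : 'I_NK (slots).                                                          *)

(* "geometric" channel parameters: delays and Dopplers *)
Inductive geo_idx (NB NQ NU NK : nat) :=
| Tbu of 'I_NB & 'I_NU & 'I_NK
| NbU of 'I_NB & 'I_NK
| Tqu of 'I_NQ & 'I_NU & 'I_NK
| NqU of 'I_NQ & 'I_NK
| Tbq of 'I_NB & 'I_NQ & 'I_NK
| Nbq of 'I_NB & 'I_NQ & 'I_NK.
Arguments Tbu {NB NQ NU NK}. Arguments NbU {NB NQ NU NK}.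
Arguments Tqu {NB NQ NU NK}. Arguments NqU {NB NQ NU NK}.
Arguments Tbq {NB NQ NU NK}. Arguments Nbq {NB NQ NU NK}.

(* nuisance parameters: channel gains and time/frequency offsets *)
Inductive nuis_idx (NB NQ NU NK : nat) :=
| Gbu of 'I_NB & 'I_NU & 'I_NK
| Gqu of 'I_NQ & 'I_NU & 'I_NK
| Gbq of 'I_NB & 'I_NQ & 'I_NK
| DbU of 'I_NB
| EbU of 'I_NB
| DQU
| EQU
| DbQ of 'I_NB
| EbQ of 'I_NB.
Arguments Gbu {NB NQ NU NK}. Arguments Gqu {NB NQ NU NK}.
Arguments Gbq {NB NQ NU NK}. Arguments DbU {NB NQ NU NK}.
Arguments EbU {NB NQ NU NK}. Arguments DQU {NB NQ NU NK}.
Arguments EQU {NB NQ NU NK}. Arguments DbQ {NB NQ NU NK}.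
Arguments EbQ {NB NQ NU NK}.

(* location parameters kappa_1 (coordinates i : 'I_3) *)
Inductive loc_idx (NB : nat) :=
| PU of 'I_3
| VU of 'I_3
| PhiU of 'I_3
| Pb of 'I_NB & 'I_3
| Vb of 'I_NB & 'I_3.
Arguments PU {NB}. Arguments VU {NB}. Arguments PhiU {NB}.
Arguments Pb {NB}. Arguments Vb {NB}.

Section FinInstances.
Variables NB NQ NU NK : nat.

Definition geo_enc (g : geo_idx NB NQ NU NK) :=
  match g with
  | Tbu b u k => inl (b, u, k)
  | NbU b k => inr (inl (b, k))
  | Tqu q u k => inr (inr (inl (q, u, k)))
  | NqU q k => inr (inr (inr (inl (q, k))))
  | Tbq b q k => inr (inr (inr (inr (inl (b, q, k)))))
  | Nbq b q k => inr (inr (inr (inr (inr (b, q, k)))))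
  end.
Definition geo_dec (x : ('I_NB * 'I_NU * 'I_NK) + (('I_NB * 'I_NK) +
   (('I_NQ * 'I_NU * 'I_NK) + (('I_NQ * 'I_NK) +
   (('I_NB * 'I_NQ * 'I_NK) + ('I_NB * 'I_NQ * 'I_NK)))))) :
   geo_idx NB NQ NU NK :=
  match x with
  | inl (b, u, k) => Tbu b u k
  | inr (inl (b, k)) => NbU b k
  | inr (inr (inl (q, u, k))) => Tqu q u k
  | inr (inr (inr (inl (q, k)))) => NqU q k
  | inr (inr (inr (inr (inl (b, q, k))))) => Tbq b q k
  | inr (inr (inr (inr (inr (b, q, k))))) => Nbq b q k
  end.
Lemma geo_encK : cancel geo_enc geo_dec. Proof. by case. Qed.
HB.instance Definition _ := Equality.copy (geo_idx NB NQ NU NK) (can_type geo_encK).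
HB.instance Definition _ := Choice.copy (geo_idx NB NQ NU NK) (can_type geo_encK).
HB.instance Definition _ := Countable.copy (geo_idx NB NQ NU NK) (can_type geo_encK).
HB.instance Definition _ := Finite.copy (geo_idx NB NQ NU NK) (can_type geo_encK).

Definition nuis_enc (n : nuis_idx NB NQ NU NK) :=
  match n with
  | Gbu b u k => inl (b, u, k)
  | Gqu q u k => inr (inl (q, u, k))
  | Gbq b q k => inr (inr (inl (b, q, k)))
  | DbU b => inr (inr (inr (inl b)))
  | EbU b => inr (inr (inr (inr (inl b))))
  | DQU => inr (inr (inr (inr (inr (inl tt)))))
  | EQU => inr (inr (inr (inr (inr (inr (inl tt))))))
  | DbQ b => inr (inr (inr (inr (inr (inr (inr (inl b)))))))
  | EbQ b => inr (inr (inr (inr (inr (inr (inr (inr b)))))))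
  end.
Definition nuis_dec (x : ('I_NB * 'I_NU * 'I_NK) + (('I_NQ * 'I_NU * 'I_NK) +
   (('I_NB * 'I_NQ * 'I_NK) + ('I_NB + ('I_NB + (unit + (unit +
   ('I_NB + 'I_NB)))))))) : nuis_idx NB NQ NU NK :=
  match x with
  | inl (b, u, k) => Gbu b u k
  | inr (inl (q, u, k)) => Gqu q u k
  | inr (inr (inl (b, q, k))) => Gbq b q k
  | inr (inr (inr (inl b))) => DbU b
  | inr (inr (inr (inr (inl b)))) => EbU b
  | inr (inr (inr (inr (inr (inl _))))) => DQU
  | inr (inr (inr (inr (inr (inr (inl _)))))) => EQU
  | inr (inr (inr (inr (inr (inr (inr (inl b))))))) => DbQ b
  | inr (inr (inr (inr (inr (inr (inr (inr b))))))) => EbQ b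
  end.
Lemma nuis_encK : cancel nuis_enc nuis_dec. Proof. by case. Qed.
HB.instance Definition _ := Equality.copy (nuis_idx NB NQ NU NK) (can_type nuis_encK).
HB.instance Definition _ := Choice.copy (nuis_idx NB NQ NU NK) (can_type nuis_encK).
HB.instance Definition _ := Countable.copy (nuis_idx NB NQ NU NK) (can_type nuis_encK).
HB.instance Definition _ := Finite.copy (nuis_idx NB NQ NU NK) (can_type nuis_encK).

Definition loc_enc (l : loc_idx NB) :=
  match l with
  | PU i => inl i
  | VU i => inr (inl i)
  | PhiU i => inr (inr (inl i))
  | Pb b i => inr (inr (inr (inl (b, i))))
  | Vb b i => inr (inr (inr (inr (b, i))))
  end.
Definition loc_dec (x : 'I_3 + ('I_3 + ('I_3 + (('I_NB * 'I_3) + ('I_NB * 'I_3)))))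
  : loc_idx NB :=
  match x with
  | inl i => PU i
  | inr (inl i) => VU i
  | inr (inr (inl i)) => PhiU i
  | inr (inr (inr (inl (b, i)))) => Pb b i
  | inr (inr (inr (inr (b, i)))) => Vb b i
  end.
Lemma loc_encK : cancel loc_enc loc_dec. Proof. by case. Qed.
HB.instance Definition _ := Equality.copy (loc_idx NB) (can_type loc_encK).
HB.instance Definition _ := Choice.copy (loc_idx NB) (can_type loc_encK).
HB.instance Definition _ := Countable.copy (loc_idx NB) (can_type loc_encK).
HB.instance Definition _ := Finite.copy (loc_idx NB) (can_type loc_encK).
End FinInstances.

Definition eta_idx NB NQ NU NK : finType :=
  (geo_idx NB NQ NU NK + nuis_idx NB NQ NU NK)%type.
(* kappa = (kappa_1, kappa_2) = location parameters + (gains, offsets) *)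
Definition kappa_idx NB NQ NU NK : finType :=
  (loc_idx NB + nuis_idx NB NQ NU NK)%type.

(* System data.  All geometric quantities enter the FIM only through the     *)
(* Jacobian entries listed in the paper; they are given here as data.        *)
Record sysdata (R : realFieldType) (NB NQ NU NK : nat) := SysData {
  c_light : R;
  f_c : R;
  Delta_t : R;
  Dl_bu : 'I_NB -> 'I_NU -> 'I_NK -> 'cV[R]_3;
  Dl_bU : 'I_NB -> 'I_NK -> 'cV[R]_3;
  Dl_qu : 'I_NQ -> 'I_NU -> 'I_NK -> 'cV[R]_3;
  Dl_qU : 'I_NQ -> 'I_NK -> 'cV[R]_3;
  Dl_bq : 'I_NB -> 'I_NQ -> 'I_NK -> 'cV[R]_3;
  dQ : 'I_3 -> 'M[R]_3;    (* partial derivatives of Q(Phi_U) wrt alpha_U, psi_U, varphi_U *)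
  s_off : 'I_NU -> 'cV[R]_3;
  gpU_nu_bU : 'I_NB -> 'I_NK -> 'cV[R]_3;
  gpU_nu_qU : 'I_NQ -> 'I_NK -> 'cV[R]_3;
  gpb_nu_bU : 'I_NB -> 'I_NK -> 'cV[R]_3;
  gpb_nu_bq : 'I_NB -> 'I_NQ -> 'I_NK -> 'cV[R]_3;
  snr_bu : 'I_NB -> 'I_NU -> 'I_NK -> R;
  snr_qu : 'I_NQ -> 'I_NU -> 'I_NK -> R;
  snr_bq : 'I_NB -> 'I_NQ -> 'I_NK -> R;
  alo_bu : 'I_NB -> 'I_NU -> 'I_NK -> R;
  alo_qu : 'I_NQ -> 'I_NU -> 'I_NK -> R;
  alo_bq : 'I_NB -> 'I_NQ -> 'I_NK -> R;
  al1_b : 'I_NB -> 'I_NK -> R;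
  al2_b : 'I_NB -> 'I_NK -> R;
  al1_q : 'I_NQ -> 'I_NK -> R;
  al2_q : 'I_NQ -> 'I_NK -> R;
  nu_bU : 'I_NB -> 'I_NK -> R;
  nu_qU : 'I_NQ -> 'I_NK -> R;
  nu_bq : 'I_NB -> 'I_NQ -> 'I_NK -> R;
  eps_bU : 'I_NB -> R;
  eps_QU : R;
  eps_bQ : 'I_NB -> R;
  gfim_bu : 'I_NB -> 'I_NU -> 'I_NK -> R;        (* gain-only diagonal FIM term *)
  gfim_qu : 'I_NQ -> 'I_NU -> 'I_NK -> R;
  gfim_bq : 'I_NB -> 'I_NQ -> 'I_NK -> R
}.

Section Model.
Variables (R : realFieldType) (NB NQ NU NK : nat) (S : sysdata R NB NQ NU NK).

Local Notation c := (c_light S).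
Local Notation fc := (f_c S).
Local Notation eta := (eta_idx NB NQ NU NK).
Local Notation kappa := (kappa_idx NB NQ NU NK).
Local Notation nuis := (nuis_idx NB NQ NU NK).
Local Notation loc := (loc_idx NB).

Definition f_obU b k := fc * (1 - nu_bU S b k) + eps_bU S b.
Definition f_oqU q k := fc * (1 - nu_qU S q k) + eps_QU S.
Definition f_obq b q k := fc * (1 - nu_bq S b q k) + eps_bQ S b.
Definition omega_bU b k :=
  al1_b S b k ^+ 2 + 2 * f_obU b k * al1_b S b k * al2_b S b k + f_obU b k ^+ 2.
Definition omega_qU q k :=
  al1_q S q k ^+ 2 + 2 * f_oqU q k * al1_q S q k * al2_q S q k + f_oqU q k ^+ 2.
Definition omega_bq b q k :=
  al1_q S q k ^+ 2 + 2 * f_obq b q k * al1_q S q k * al2_q S q k + f_obq b q k ^+ 2.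

Definition ind (x y : eta) : R := (x == y)%:R.

Definition obs_fim (T Nu : eta) (D E G : eta) (snr w a g : R) (e e' : eta) : R :=
  snr * w * (ind T e * ind T e' + ind D e * ind D e'
             - ind T e * ind D e' - ind D e * ind T e')
  + (snr / 2 * fc ^+ 2 * a ^+ 2) * (ind Nu e * ind Nu e')
  - (snr / 2 * fc * a ^+ 2) * (ind Nu e * ind E e' + ind E e * ind Nu e')
  + (snr / 2 * a ^+ 2) * (ind E e * ind E e')
  + g * (ind G e * ind G e').

Definition J_eta (e e' : eta) : R :=
  \sum_(b < NB) \sum_(u < NU) \sum_(k < NK)
     obs_fim (inl (Tbu b u k)) (inl (NbU b k)) (inr (DbU b)) (inr (EbU b))
             (inr (Gbu b u k)) (snr_bu S b u k) (omega_bU b k) (alo_bu S b u k)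
             (gfim_bu S b u k) e e'
  + \sum_(q < NQ) \sum_(u < NU) \sum_(k < NK)
     obs_fim (inl (Tqu q u k)) (inl (NqU q k)) (inr DQU) (inr EQU)
             (inr (Gqu q u k)) (snr_qu S q u k) (omega_qU q k) (alo_qu S q u k)
             (gfim_qu S q u k) e e'
  + \sum_(b < NB) \sum_(q < NQ) \sum_(k < NK)
     obs_fim (inl (Tbq b q k)) (inl (Nbq b q k)) (inr (DbQ b)) (inr (EbQ b))
             (inr (Gbq b q k)) (snr_bq S b q k) (omega_bq b q k) (alo_bq S b q k)
             (gfim_bq S b q k) e e'.

(* Jacobian Upsilon : entry (kappa-component x, eta-component e) = d e / d x *)
Definition ups (x : kappa) (e : eta) : R :=
  match x, e with
  | inl (PU i), inl (Tbu b u k) => Dl_bu S b u k i 0 / c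
  | inl (PU i), inl (Tqu q u k) => Dl_qu S q u k i 0 / c
  | inl (PU i), inl (NbU b k) => gpU_nu_bU S b k i 0
  | inl (PU i), inl (NqU q k) => gpU_nu_qU S q k i 0
  | inl (VU i), inl (Tbu b u k) => k%:R * Delta_t S * Dl_bu S b u k i 0 / c
  | inl (VU i), inl (Tqu q u k) => k%:R * Delta_t S * Dl_qu S q u k i 0 / c
  | inl (VU i), inl (NbU b k) => - Dl_bU S b k i 0 / c
  | inl (VU i), inl (NqU q k) => - Dl_qU S q k i 0 / c
  | inl (PhiU j), inl (Tbu b u k) =>
      ((Dl_bu S b u k)^T *m (dQ S j *m s_off S u)) 0 0 / c
  | inl (PhiU j), inl (Tqu q u k) =>
      ((Dl_qu S q u k)^T *m (dQ S j *m s_off S u)) 0 0 / c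
  | inl (Pb b' i), inl (Tbu b u k) => (b == b')%:R * (- Dl_bu S b u k i 0 / c)
  | inl (Pb b' i), inl (Tbq b q k) => (b == b')%:R * (- Dl_bq S b q k i 0 / c)
  | inl (Pb b' i), inl (NbU b k) => (b == b')%:R * gpb_nu_bU S b k i 0
  | inl (Pb b' i), inl (Nbq b q k) => (b == b')%:R * gpb_nu_bq S b q k i 0
  | inl (Vb b' i), inl (Tbu b u k) =>
      (b == b')%:R * (- (k%:R * Delta_t S * Dl_bu S b u k i 0) / c)
  | inl (Vb b' i), inl (Tbq b q k) =>
      (b == b')%:R * (- (k%:R * Delta_t S * Dl_bq S b q k i 0) / c)
  | inl (Vb b' i), inl (NbU b k) => (b == b')%:R * (Dl_bU S b k i 0 / c)
  | inl (Vb b' i), inl (Nbq b q k) => (b == b')%:R * (Dl_bq S b q k i 0 / c)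
  | inr n, inr n' => (n == n')%:R
  | _, _ => 0
  end.

Definition J_kappa (x y : kappa) : R :=
  \sum_(e : eta) \sum_(e' : eta) ups x e * J_eta e e' * ups y e'.

Definition J12 : 'M[R]_(#|{: loc}|, #|{: nuis}|) :=
  \matrix_(i, j) J_kappa (inl (enum_val i)) (inr (enum_val j)).
Definition J22 : 'M[R]_(#|{: nuis}|) :=
  \matrix_(i, j) J_kappa (inr (enum_val i)) (inr (enum_val j)).

Definition J_nu : 'M[R]_(#|{: loc}|) := J12 *m invmx J22 *m J12^T.

Definition G_pU_pU : 'M[R]_3 :=
  \matrix_(i, j) J_nu (enum_rank (PU i : loc)) (enum_rank (PU j : loc)).

Definition a_b (b : 'I_NB) : 'cV[R]_3 :=
  \sum_(k < NK) \sum_(u < NU) (snr_bu S b u k * omega_bU b k / c) *: Dl_bu S b u k.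
Definition a_Q : 'cV[R]_3 :=
  \sum_(q < NQ) \sum_(u < NU) \sum_(k < NK)
     (snr_qu S q u k * omega_qU q k / c) *: Dl_qu S q u k.
Definition d_b (b : 'I_NB) : 'cV[R]_3 :=
  \sum_(u < NU) \sum_(k < NK)
     (snr_bu S b u k * (fc * alo_bu S b u k ^+ 2 / 2)) *: gpU_nu_bU S b k.
Definition d_Q : 'cV[R]_3 :=
  \sum_(q < NQ) \sum_(u < NU) \sum_(k < NK)
     (snr_qu S q u k * (fc * alo_qu S q u k ^+ 2 / 2)) *: gpU_nu_qU S q k.

End Model.

(* The nuisance block J_{kappa_2} of the location FIM is diagonal: a gain or a
   time/frequency offset enters only through its own observations, and no
   observation couples two nuisance parameters.  Hence
   J^nu = J_{kappa_1,kappa_2} J_{kappa_2}^-1 J_{kappa_1,kappa_2}^T is a sum of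
   rank-one terms, one per nuisance parameter, divided by that parameter's
   information.  In the row of p_{U,0} only the receiver offsets delta_bU,
   epsilon_bU, delta_QU and epsilon_QU carry cross-information, equal to -a_b, -d_b,
   -a_Q and -d_Q, and their informations are the SNR-weighted sums in the
   denominators.  The positivity hypotheses make every diagonal entry of
   J_{kappa_2} positive, hence the block invertible. *)

From HB Require Import structures.
From mathcomp Require Import all_boot all_order all_algebra.
From mathcomp Require Import ring lra.
Import Order.TTheory GRing.Theory Num.Theory.
Set Implicit Arguments. Unset Strict Implicit. Unset Printing Implicit Defensive.
Local Open Scope ring_scope.

Section DiagonalMatrices.
Variables (F : fieldType) (n : nat) (d : 'rV[F]_n).

Lemma invmx_diag : (forall k, d 0 k != 0) ->
  invmx (diag_mx d) = diag_mx (map_mx GRing.inv d).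
Proof.
move=> d_neq0.
have dK : diag_mx d *m diag_mx (map_mx GRing.inv d) = 1%:M.
  by apply/matrixP => i j; rewrite mulmx_diag !mxE mulfV.
have [d_unit _] := mulmx1_unit dK.
by rewrite -[RHS](mulKmx d_unit) dK mulmx1.
Qed.

Lemma mul_mx_diag_trmxE m (A B : 'M[F]_(m, n)) i j :
  (A *m diag_mx d *m B^T) i j = \sum_k A i k * d 0 k * B j k.
Proof. by rewrite mul_mx_diag mxE; apply: eq_bigr => k _; rewrite !mxE. Qed.

End DiagonalMatrices.

Section Sums.
Variable R : realFieldType.

Lemma sum_delta (I : finType) (F : I -> R) i0 : \sum_i F i * (i0 == i)%:R = F i0.
Proof.
rewrite (bigD1 i0) //= eqxx mulr1 big1 ?addr0 // => i /negbTE.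
by rewrite eq_sym => ->; rewrite mulr0.
Qed.

Lemma sum_mul_delta (I : finType) (x : R) (w : I -> R) i0 :
  \sum_i x * (i0 == i)%:R * w i = x * w i0.
Proof. by rewrite -(sum_delta (fun i => x * w i)); apply: eq_bigr => i _; rewrite mulrAC. Qed.

Lemma sum_delta_image (I J : finType) (h : J -> I) (A : J -> R) (w : I -> R) :
  \sum_i (\sum_x A x * (h x == i)%:R) * w i = \sum_x A x * w (h x).
Proof.
under eq_bigr do rewrite mulr_suml.
by rewrite exchange_big; apply: eq_bigr => x _; rewrite sum_mul_delta.
Qed.

Lemma sum_delta_inj (I : finType) (T : eqType) (h : I -> T) (F : I -> R) i0 :
  injective h -> \sum_i F i * (h i == h i0)%:R = F i0.
Proof.
move=> h_inj; rewrite -(sum_delta F i0); apply: eq_bigr => i _.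
by rewrite (inj_eq h_inj) eq_sym.
Qed.

Lemma sumr_lin (I : finType) (F X Y : I -> R) p q :
  (forall i, F i = - (X i * p + Y i * q)) ->
  \sum_i F i = - ((\sum_i X i) * p + (\sum_i Y i) * q).
Proof.
by move=> FE; rewrite !mulr_suml -big_split -sumrN; apply: eq_bigr => i _.
Qed.

Lemma sum3_delta (I J K : finType) (T : eqType) (h : I -> T) (F : I -> J -> K -> R) i0 :
  injective h ->
  \sum_i \sum_j \sum_k F i j k * (h i0 == h i)%:R = \sum_j \sum_k F i0 j k.
Proof.
move=> h_inj; rewrite -(sum_delta (fun i => \sum_j \sum_k F i j k)).
apply: eq_bigr => i _; rewrite (inj_eq h_inj).
by rewrite mulr_suml; apply: eq_bigr => j _; rewrite mulr_suml.
Qed.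

Lemma sum3_mul0 (I J K : finType) (F G H : I -> J -> K -> R) :
  \sum_i \sum_j \sum_k (F i j k * 0 + G i j k * 0 + H i j k * 0) = 0.
Proof. by do 3 (apply: big1 => ? _); rewrite !mulr0 !addr0. Qed.

Lemma sum_mulr_sum3 (I J K L : finType) (f : L -> R) (X : I -> J -> K -> L -> R) :
  \sum_l f l * (\sum_i \sum_j \sum_k X i j k l)
  = \sum_i \sum_j \sum_k \sum_l f l * X i j k l.
Proof.
under eq_bigr do rewrite mulr_sumr.
rewrite exchange_big; apply: eq_bigr => i _.
under eq_bigr do rewrite mulr_sumr.
rewrite exchange_big; apply: eq_bigr => j _.
under eq_bigr do rewrite mulr_sumr.
by rewrite exchange_big.
Qed.

Lemma sum3_ge0 (I J K : finType) (F : I -> J -> K -> R) :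
  (forall i j k, 0 <= F i j k) -> 0 <= \sum_i \sum_j \sum_k F i j k.
Proof. by move=> F_ge0; do 3 (apply: sumr_ge0 => ? _). Qed.

Lemma sumr_gt0_term (I : finType) (F : I -> R) i0 :
  (forall i, 0 <= F i) -> 0 < F i0 -> 0 < \sum_i F i.
Proof. by move=> F_ge0 F_gt0; rewrite (bigD1 i0) //= ltr_wpDr // sumr_ge0. Qed.

Lemma sum3_gt0 (I J K : finType) (F : I -> J -> K -> R) i j k :
  (forall i j k, 0 <= F i j k) -> 0 < F i j k -> 0 < \sum_i \sum_j \sum_k F i j k.
Proof.
move=> F_ge0 F_gt0.
have F2_ge0 i' j' : 0 <= \sum_k F i' j' k by apply: sumr_ge0.
apply: (sumr_gt0_term (i0 := i)) => [i'|]; first exact: sumr_ge0.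
by apply: (sumr_gt0_term (i0 := j)) => //; apply: (sumr_gt0_term (i0 := k)).
Qed.

End Sums.

Section ObservationWeight.
Variables (R : realFieldType) (T : eqType).

Definition obs_weight (snr w a g : R) (D E G m : T) : R :=
  snr * w * (m == D)%:R + snr / 2 * a ^+ 2 * (m == E)%:R + g * (m == G)%:R.

Lemma obs_weight_ge0 snr w a g D E G m :
  0 < snr -> 0 < w -> 0 < g -> 0 <= obs_weight snr w a g D E G m.
Proof.
move=> snr_gt0 w_gt0 g_gt0.
have sw_ge0 : 0 <= snr * w by rewrite mulr_ge0 ?ltW.
have sa_ge0 : 0 <= snr / 2 * a ^+ 2 by rewrite mulr_ge0 ?sqr_ge0 ?divr_ge0 ?ltW.
by rewrite /obs_weight !addr_ge0 // mulr_ge0 // ltW.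
Qed.

Lemma obs_weight_gt0 snr w a g D E G m :
  0 < snr -> 0 < w -> 0 < a -> 0 < g -> [|| m == D, m == E | m == G] ->
  0 < obs_weight snr w a g D E G m.
Proof.
move=> snr_gt0 w_gt0 a_gt0 g_gt0.
have sw_gt0 : 0 < snr * w by rewrite mulr_gt0.
have sa_gt0 : 0 < snr / 2 * a ^+ 2 by rewrite mulr_gt0 ?divr_gt0 ?exprn_gt0.
have t_ge0 (c : R) x : 0 < c -> 0 <= c * (m == x)%:R by move=> c_gt0; rewrite mulr_ge0 // ltW.
have t_gt0 (c : R) x : 0 < c -> m == x -> 0 < c * (m == x)%:R by move=> c_gt0 ->; rewrite mulr1.
rewrite /obs_weight; case/or3P => mx;
  [have := t_gt0 _ D sw_gt0 mx | have := t_gt0 _ E sa_gt0 mx | have := t_gt0 _ G g_gt0 mx];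
  have := t_ge0 _ D sw_gt0; have := t_ge0 _ E sa_gt0; have := t_ge0 _ G g_gt0; lra.
Qed.

Lemma mulr_delta_trans (x y z : T) :
  (x == y)%:R * (y == z)%:R = (x == z)%:R * (x == y)%:R :> R.
Proof. by case: eqP => [->|_]; rewrite ?mul0r ?mulr0 ?mul1r ?mulr1. Qed.

(* A summand of [J_kappa_nuis] on a nuisance row.  It is stated over an abstract
   [eqType]: on [nuis_idx] itself [ring] stalls on the boolean indicators. *)
Lemma obs_col_nuis_diag (c snr w a g : R) (D E G m n : T) :
    snr * w * ((m == D)%:R - 0) * (D == n)%:R
  + snr / 2 * a ^+ 2 * ((m == E)%:R - c * 0) * (E == n)%:R
  + g * (m == G)%:R * (G == n)%:R
  = (m == n)%:R * obs_weight snr w a g D E G m.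
Proof.
rewrite /obs_weight !subr0 mulr0 subr0 -![_ * _ * (_ == n)%:R]mulrA !mulr_delta_trans.
ring.
Qed.

End ObservationWeight.

Section Model.
Variables (R : realFieldType) (NB NQ NU NK : nat) (S : sysdata R NB NQ NU NK).

Local Notation c := (c_light S).
Local Notation fc := (f_c S).
Local Notation eta := (eta_idx NB NQ NU NK).
Local Notation nuis := (nuis_idx NB NQ NU NK).
Local Notation loc := (loc_idx NB).
Local Notation ups := (ups S).
Local Notation J_kappa := (J_kappa S).

Lemma J_kappa_nuis_eta x n :
  J_kappa x (inr n) = \sum_e ups x e * J_eta S e (inr n).
Proof.
apply: eq_bigr => e _.
rewrite -[RHS](sum_delta (fun e' => ups x e * J_eta S e e') (inr n)).
by apply: eq_bigr => -[] e' _.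
Qed.

Lemma obs_fim_nuis_col (f : eta -> R) T Nu D E G snr w a g n :
  \sum_e f e * obs_fim S (inl T) (inl Nu) (inr D) (inr E) (inr G) snr w a g e (inr n)
  = snr * w * (f (inr D) - f (inl T)) * (D == n)%:R
  + snr / 2 * a ^+ 2 * (f (inr E) - fc * f (inl Nu)) * (E == n)%:R
  + g * f (inr G) * (G == n)%:R.
Proof.
have inr_eq X : (inr X == inr n :> eta) = (X == n) by [].
rewrite /obs_fim /ind /= !inr_eq.
set dD := (D == n)%:R; set dE := (E == n)%:R; set dG := (G == n)%:R.
transitivity (\sum_e
   (f e * (inl T == e)%:R * - (snr * w * dD) + f e * (inr D == e)%:R * (snr * w * dD)
  + f e * (inl Nu == e)%:R * - (snr / 2 * fc * a ^+ 2 * dE)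
  + f e * (inr E == e)%:R * (snr / 2 * a ^+ 2 * dE)
  + f e * (inr G == e)%:R * (g * dG))).
  by apply: eq_bigr => e _; ring.
by rewrite !big_split /= -!mulr_suml !sum_delta; ring.
Qed.

Lemma J_kappa_nuis x n : J_kappa x (inr n) =
    \sum_(b < NB) \sum_(u < NU) \sum_(k < NK)
      (snr_bu S b u k * omega_bU S b k
         * (ups x (inr (DbU b)) - ups x (inl (Tbu b u k))) * (DbU b == n)%:R
     + snr_bu S b u k / 2 * alo_bu S b u k ^+ 2
         * (ups x (inr (EbU b)) - fc * ups x (inl (NbU b k))) * (EbU b == n)%:R
     + gfim_bu S b u k * ups x (inr (Gbu b u k)) * (Gbu b u k == n)%:R)
  + \sum_(q < NQ) \sum_(u < NU) \sum_(k < NK)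
      (snr_qu S q u k * omega_qU S q k
         * (ups x (inr DQU) - ups x (inl (Tqu q u k))) * (DQU == n)%:R
     + snr_qu S q u k / 2 * alo_qu S q u k ^+ 2
         * (ups x (inr EQU) - fc * ups x (inl (NqU q k))) * (EQU == n)%:R
     + gfim_qu S q u k * ups x (inr (Gqu q u k)) * (Gqu q u k == n)%:R)
  + \sum_(b < NB) \sum_(q < NQ) \sum_(k < NK)
      (snr_bq S b q k * omega_bq S b q k
         * (ups x (inr (DbQ b)) - ups x (inl (Tbq b q k))) * (DbQ b == n)%:R
     + snr_bq S b q k / 2 * alo_bq S b q k ^+ 2
         * (ups x (inr (EbQ b)) - fc * ups x (inl (Nbq b q k))) * (EbQ b == n)%:R
     + gfim_bq S b q k * ups x (inr (Gbq b q k)) * (Gbq b q k == n)%:R).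
Proof.
rewrite J_kappa_nuis_eta /J_eta.
under eq_bigr do rewrite !mulrDr.
rewrite !big_split /= !sum_mulr_sum3.
by congr (_ + _ + _); do 3 (apply: eq_bigr => ? _); rewrite obs_fim_nuis_col.
Qed.

Definition info_bu (m : nuis) : R := \sum_(b < NB) \sum_(u < NU) \sum_(k < NK)
  obs_weight (snr_bu S b u k) (omega_bU S b k) (alo_bu S b u k) (gfim_bu S b u k)
             (DbU b) (EbU b) (Gbu b u k) m.
Definition info_qu (m : nuis) : R := \sum_(q < NQ) \sum_(u < NU) \sum_(k < NK)
  obs_weight (snr_qu S q u k) (omega_qU S q k) (alo_qu S q u k) (gfim_qu S q u k)
             DQU EQU (Gqu q u k) m.
Definition info_bq (m : nuis) : R := \sum_(b < NB) \sum_(q < NQ) \sum_(k < NK)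
  obs_weight (snr_bq S b q k) (omega_bq S b q k) (alo_bq S b q k) (gfim_bq S b q k)
             (DbQ b) (EbQ b) (Gbq b q k) m.
Definition nuis_info (m : nuis) : R := info_bu m + info_qu m + info_bq m.

Lemma J_kappa_nuis_diag m n : J_kappa (inr m) (inr n) = (m == n)%:R * nuis_info m.
Proof.
rewrite J_kappa_nuis /nuis_info /info_bu /info_qu /info_bq !mulrDr.
congr (_ + _ + _); rewrite mulr_sumr; apply: eq_bigr => ? _;
  rewrite mulr_sumr; apply: eq_bigr => ? _; rewrite mulr_sumr; apply: eq_bigr => ? _;
  exact: obs_col_nuis_diag.
Qed.

Lemma nuis_info_DbU b :
  nuis_info (DbU b) = \sum_(u < NU) \sum_(k < NK) snr_bu S b u k * omega_bU S b k.
Proof.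
rewrite /nuis_info /info_bu /info_qu /info_bq /obs_weight /= !sum3_mul0 !addr0.
under eq_bigr do under eq_bigr do under eq_bigr do rewrite !mulr0 !addr0.
by apply: sum3_delta => ? ? [].
Qed.

Lemma nuis_info_EbU b : nuis_info (EbU b) =
  \sum_(u < NU) \sum_(k < NK) snr_bu S b u k / 2 * alo_bu S b u k ^+ 2.
Proof.
rewrite /nuis_info /info_bu /info_qu /info_bq /obs_weight /= !sum3_mul0 !addr0.
under eq_bigr do under eq_bigr do under eq_bigr do rewrite !mulr0 add0r addr0.
by apply: sum3_delta => ? ? [].
Qed.

Lemma nuis_info_DQU : nuis_info DQU =
  \sum_(q < NQ) \sum_(u < NU) \sum_(k < NK) snr_qu S q u k * omega_qU S q k.
Proof.
rewrite /nuis_info /info_bu /info_qu /info_bq /obs_weight /= !sum3_mul0 add0r addr0.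
by under eq_bigr do under eq_bigr do under eq_bigr do rewrite !mulr0 !addr0 mulr1.
Qed.

Lemma nuis_info_EQU : nuis_info EQU =
  \sum_(q < NQ) \sum_(u < NU) \sum_(k < NK) snr_qu S q u k / 2 * alo_qu S q u k ^+ 2.
Proof.
rewrite /nuis_info /info_bu /info_qu /info_bq /obs_weight /= !sum3_mul0 add0r addr0.
by under eq_bigr do under eq_bigr do under eq_bigr do rewrite !mulr0 add0r addr0 mulr1.
Qed.

Lemma a_b_entry b i : a_b S b i 0 =
  \sum_(u < NU) \sum_(k < NK) snr_bu S b u k * omega_bU S b k * (Dl_bu S b u k i 0 / c).
Proof.
rewrite /a_b summxE; under eq_bigr do rewrite summxE.
by rewrite exchange_big; apply: eq_bigr => u _; apply: eq_bigr => k _; rewrite mxE; ring.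
Qed.

Lemma d_b_entry b i : d_b S b i 0 =
  \sum_(u < NU) \sum_(k < NK)
    snr_bu S b u k / 2 * alo_bu S b u k ^+ 2 * (fc * gpU_nu_bU S b k i 0).
Proof.
rewrite /d_b summxE; apply: eq_bigr => u _; rewrite summxE.
by apply: eq_bigr => k _; rewrite mxE; ring.
Qed.

Lemma a_Q_entry i : a_Q S i 0 =
  \sum_(q < NQ) \sum_(u < NU) \sum_(k < NK)
    snr_qu S q u k * omega_qU S q k * (Dl_qu S q u k i 0 / c).
Proof.
rewrite /a_Q summxE; apply: eq_bigr => q _; rewrite summxE; apply: eq_bigr => u _.
by rewrite summxE; apply: eq_bigr => k _; rewrite mxE; ring.
Qed.

Lemma d_Q_entry i : d_Q S i 0 =
  \sum_(q < NQ) \sum_(u < NU) \sum_(k < NK)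
    snr_qu S q u k / 2 * alo_qu S q u k ^+ 2 * (fc * gpU_nu_qU S q k i 0).
Proof.
rewrite /d_Q summxE; apply: eq_bigr => q _; rewrite summxE; apply: eq_bigr => u _.
by rewrite summxE; apply: eq_bigr => k _; rewrite mxE; ring.
Qed.

Lemma J_kappa_pU i n : J_kappa (inl (PU i)) (inr n) =
  - (\sum_b a_b S b i 0 * (DbU b == n)%:R) - (\sum_b d_b S b i 0 * (EbU b == n)%:R)
  - a_Q S i 0 * (DQU == n)%:R - d_Q S i 0 * (EQU == n)%:R.
Proof.
have col_loc (A B g t t' x y z : R) :
  A * (0 - t) * x + B * (0 - t') * y + g * 0 * z = - (A * t * x + B * t' * y).
  by rewrite !sub0r mulr0 mul0r addr0 !mulrN !mulNr opprD.
rewrite J_kappa_nuis /= [X in _ + X]big1 ?addr0 => [|b _]; last first.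
  by apply: big1 => q _; apply: big1 => k _; rewrite !(mulr0, subrr, mul0r, addr0).
rewrite -[RHS]addrA -2!opprD -big_split /=; congr (_ + _).
  rewrite -sumrN; apply: eq_bigr => b _; rewrite a_b_entry d_b_entry.
  by apply: sumr_lin => u; apply: sumr_lin => k; rewrite col_loc.
rewrite a_Q_entry d_Q_entry.
by apply: sumr_lin => q; apply: sumr_lin => u; apply: sumr_lin => k; rewrite col_loc.
Qed.

Lemma J_kappa_pU_DbU i b : J_kappa (inl (PU i)) (inr (DbU b)) = - a_b S b i 0.
Proof.
rewrite J_kappa_pU /= sum_delta_inj => [|? ? []] //.
by rewrite -mulr_suml !mulr0 !subr0.
Qed.

Lemma J_kappa_pU_EbU i b : J_kappa (inl (PU i)) (inr (EbU b)) = - d_b S b i 0.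
Proof.
rewrite J_kappa_pU /= sum_delta_inj => [|? ? []] //.
by rewrite -mulr_suml !mulr0 !oppr0 add0r !addr0.
Qed.

Lemma J_kappa_pU_DQU i : J_kappa (inl (PU i)) (inr DQU) = - a_Q S i 0.
Proof. by rewrite J_kappa_pU /= -!mulr_suml !mulr0 mulr1 !oppr0 !add0r ?addr0. Qed.

Lemma J_kappa_pU_EQU i : J_kappa (inl (PU i)) (inr EQU) = - d_Q S i 0.
Proof. by rewrite J_kappa_pU /= -!mulr_suml !mulr0 mulr1 !oppr0 !add0r ?addr0. Qed.

Lemma sum_J_kappa_pU i (w : nuis -> R) :
  \sum_n J_kappa (inl (PU i)) (inr n) * w n =
  - (\sum_b a_b S b i 0 * w (DbU b)) - (\sum_b d_b S b i 0 * w (EbU b))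
  - a_Q S i 0 * w DQU - d_Q S i 0 * w EQU.
Proof.
under eq_bigr do rewrite J_kappa_pU !mulrBl mulNr.
by rewrite !big_split /= !sumrN !sum_delta_image !sum_mul_delta.
Qed.

Lemma J22_diag : J22 S = diag_mx (\row_k nuis_info (enum_val k)).
Proof.
apply/matrixP => k l.
by rewrite !mxE J_kappa_nuis_diag (inj_eq enum_val_inj) mulr_natl.
Qed.

Section Positivity.

Hypotheses (NQ_gt0 : (0 < NQ)%N) (NU_gt0 : (0 < NU)%N) (NK_gt0 : (0 < NK)%N).
Hypotheses (snr_bu_gt0 : forall b u k, 0 < snr_bu S b u k)
  (snr_qu_gt0 : forall q u k, 0 < snr_qu S q u k)
  (snr_bq_gt0 : forall b q k, 0 < snr_bq S b q k).
Hypotheses (alo_bu_gt0 : forall b u k, 0 < alo_bu S b u k)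
  (alo_qu_gt0 : forall q u k, 0 < alo_qu S q u k)
  (alo_bq_gt0 : forall b q k, 0 < alo_bq S b q k).
Hypotheses (omega_bU_gt0 : forall b k, 0 < omega_bU S b k)
  (omega_qU_gt0 : forall q k, 0 < omega_qU S q k)
  (omega_bq_gt0 : forall b q k, 0 < omega_bq S b q k).
Hypotheses (gfim_bu_gt0 : forall b u k, 0 < gfim_bu S b u k)
  (gfim_qu_gt0 : forall q u k, 0 < gfim_qu S q u k)
  (gfim_bq_gt0 : forall b q k, 0 < gfim_bq S b q k).

Lemma info_bu_ge0 m : 0 <= info_bu m.
Proof. by apply: sum3_ge0 => b u k; apply: obs_weight_ge0. Qed.

Lemma info_qu_ge0 m : 0 <= info_qu m.
Proof. by apply: sum3_ge0 => q u k; apply: obs_weight_ge0. Qed.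

Lemma info_bq_ge0 m : 0 <= info_bq m.
Proof. by apply: sum3_ge0 => b q k; apply: obs_weight_ge0. Qed.

Lemma nuis_info_gt0 m : 0 < nuis_info m.
Proof.
suff : [\/ 0 < info_bu m, 0 < info_qu m | 0 < info_bq m].
  have := info_bu_ge0 m; have := info_qu_ge0 m; have := info_bq_ge0 m.
  by rewrite /nuis_info => ? ? ? [] ?; lra.
have bu_gt0 b u k : [|| m == DbU b, m == EbU b | m == Gbu b u k] -> 0 < info_bu m.
  move=> hm; apply: (sum3_gt0 (i := b) (j := u) (k := k)) => [b' u' k'|].
    exact: obs_weight_ge0.
  exact: obs_weight_gt0.
have qu_gt0 q u k : [|| m == DQU, m == EQU | m == Gqu q u k] -> 0 < info_qu m.
  move=> hm; apply: (sum3_gt0 (i := q) (j := u) (k := k)) => [q' u' k'|].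
    exact: obs_weight_ge0.
  exact: obs_weight_gt0.
have bq_gt0 b q k : [|| m == DbQ b, m == EbQ b | m == Gbq b q k] -> 0 < info_bq m.
  move=> hm; apply: (sum3_gt0 (i := b) (j := q) (k := k)) => [b' q' k'|].
    exact: obs_weight_ge0.
  exact: obs_weight_gt0.
pose q0 := Ordinal NQ_gt0; pose u0 := Ordinal NU_gt0; pose k0 := Ordinal NK_gt0.
case: m bu_gt0 qu_gt0 bq_gt0 => [b u k|q u k|b q k|b|b| | |b|b] bu_gt0 qu_gt0 bq_gt0.
- by apply: Or31; apply: (bu_gt0 b u k); rewrite eqxx !orbT.
- by apply: Or32; apply: (qu_gt0 q u k); rewrite eqxx !orbT.
- by apply: Or33; apply: (bq_gt0 b q k); rewrite eqxx !orbT.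
- by apply: Or31; apply: (bu_gt0 b u0 k0); rewrite eqxx.
- by apply: Or31; apply: (bu_gt0 b u0 k0); rewrite eqxx orbT.
- by apply: Or32; apply: (qu_gt0 q0 u0 k0); rewrite eqxx.
- by apply: Or32; apply: (qu_gt0 q0 u0 k0); rewrite eqxx orbT.
- by apply: Or33; apply: (bq_gt0 b q0 k0); rewrite eqxx.
- by apply: Or33; apply: (bq_gt0 b q0 k0); rewrite eqxx orbT.
Qed.

Lemma J_nu_entry (x y : loc) : J_nu S (enum_rank x) (enum_rank y) =
  \sum_n J_kappa (inl x) (inr n) * J_kappa (inl y) (inr n) / nuis_info n.
Proof.
rewrite /J_nu J22_diag invmx_diag => [|k]; last by rewrite mxE gt_eqF ?nuis_info_gt0.
rewrite mul_mx_diag_trmxE (big_enum_val (A := {: nuis})) /=.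
by apply: eq_bigr => k _; rewrite !mxE !enum_rankK mulrAC.
Qed.

Lemma G_pU_pU_entry i j : G_pU_pU S i j =
    \sum_b a_b S b i 0 * a_b S b j 0
             / \sum_(u < NU) \sum_(k < NK) snr_bu S b u k * omega_bU S b k
  + a_Q S i 0 * a_Q S j 0
      / \sum_(q < NQ) \sum_(u < NU) \sum_(k < NK) snr_qu S q u k * omega_qU S q k
  + \sum_b d_b S b i 0 * d_b S b j 0
             / \sum_(u < NU) \sum_(k < NK) snr_bu S b u k / 2 * alo_bu S b u k ^+ 2
  + d_Q S i 0 * d_Q S j 0
      / \sum_(q < NQ) \sum_(u < NU) \sum_(k < NK) snr_qu S q u k / 2 * alo_qu S q u k ^+ 2.
Proof.
rewrite mxE J_nu_entry.
under eq_bigr do rewrite -mulrA.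
rewrite sum_J_kappa_pU J_kappa_pU_DQU J_kappa_pU_EQU nuis_info_DQU nuis_info_EQU.
under eq_bigr do rewrite J_kappa_pU_DbU nuis_info_DbU.
under [X in _ - X - _ - _]eq_bigr do rewrite J_kappa_pU_EbU nuis_info_EbU.
rewrite -!sumrN [X in X - _ = _]addrAC; congr (_ + _ + _ + _); try apply: eq_bigr => b _;
  by rewrite mulNr mulrN opprK mulrA.
Qed.

End Positivity.

End Model.

Theorem lemma16 (R : realFieldType) (NB NQ NU NK : nat)
  (S : sysdata R NB NQ NU NK) :
  (0 < NQ)%N -> (0 < NU)%N -> (0 < NK)%N ->
  0 < c_light S -> 0 < f_c S ->
  (forall b u k, 0 < snr_bu S b u k) ->
  (forall q u k, 0 < snr_qu S q u k) ->
  (forall b q k, 0 < snr_bq S b q k) ->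
  (forall b u k, 0 < alo_bu S b u k) ->
  (forall q u k, 0 < alo_qu S q u k) ->
  (forall b q k, 0 < alo_bq S b q k) ->
  (forall b k, 0 < omega_bU S b k) ->
  (forall q k, 0 < omega_qU S q k) ->
  (forall b q k, 0 < omega_bq S b q k) ->
  (forall b u k, 0 < gfim_bu S b u k) ->
  (forall q u k, 0 < gfim_qu S q u k) ->
  (forall b q k, 0 < gfim_bq S b q k) ->
  G_pU_pU S =
    \sum_(b < NB) (\sum_(u < NU) \sum_(k < NK) snr_bu S b u k * omega_bU S b k)^-1
                    *: (a_b S b *m (a_b S b)^T)
  + (\sum_(q < NQ) \sum_(u < NU) \sum_(k < NK) snr_qu S q u k * omega_qU S q k)^-1
                    *: (a_Q S *m (a_Q S)^T)
  + \sum_(b < NB) (\sum_(u < NU) \sum_(k < NK)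
                      snr_bu S b u k / 2 * alo_bu S b u k ^+ 2)^-1
                    *: (d_b S b *m (d_b S b)^T)
  + (\sum_(q < NQ) \sum_(u < NU) \sum_(k < NK)
                      snr_qu S q u k / 2 * alo_qu S q u k ^+ 2)^-1
                    *: (d_Q S *m (d_Q S)^T).
Proof.
move=> NQ_gt0 NU_gt0 NK_gt0 _ _ snr_bu_gt0 snr_qu_gt0 snr_bq_gt0 alo_bu_gt0 alo_qu_gt0
  alo_bq_gt0 omega_bU_gt0 omega_qU_gt0 omega_bq_gt0 gfim_bu_gt0 gfim_qu_gt0 gfim_bq_gt0.
apply/matrixP => i j.
rewrite G_pU_pU_entry // !mxE ![in RHS]summxE.
by congr (_ + _ + _ + _); try apply: eq_bigr => b _; rewrite !(mxE, big_ord1) mulrC.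
Qed.
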